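(* Let $(\mathsf P,\mathcal O)$ be a semitopology. Then the map $\mathrm{nbhd}:\mathsf P\to\mathrm{Points}(\mathcal O,\subseteq,\between)$, $p\mapsto\{O\in\mathcal O\mid p\in O\}$, is a continuous map from $(\mathsf P,\mathcal O)$ to $\mathrm{St}(\mathcal O,\subseteq,\between)$; the semitopology $\mathrm{St}(\mathcal O,\subseteq,\between)$ is sober; and $\mathrm{nbhd}^{-1}$ maps each open set $\mathrm{Op}(O)$ of $\mathrm{St}(\mathcal O,\subseteq,\between)$ to $O$, giving a bijection between the open sets of $\mathrm{St}(\mathcal O,\subseteq,\between)$ and $\mathcal O$ which preserves and reflects both subset inclusion and nonempty intersection (an isomorphism of semiframes).
   Context: A semitopology is a set $\mathsf P$ with $\mathcal O\subseteq\mathcal P(\mathsf P)$ containing $\varnothing,\mathsf P$ and closed under arbitrary unions; a map between semitopologies is continuous when preimages of open sets are open. $(\mathcal O,\subseteq,\between)$, with $O\between O'$ iff $O\cap O'\neq\varnothing$, is a semiframe. In a semiframe (complete join-semilattice $(X,\le)$ with commutative $\ast$, $x\ast x$ for $x\neq\bot$, and $x\ast\bigvee Y$ iff $\exists y\in Y.\,x\ast y$), an abstract point is a nonempty, up-closed, pairwise $\ast$-compatible, completely prime subset ($\bigvee Y\in F\Rightarrow\exists y\in Y.\,y\in F$, for all $Y$ including $\varnothing$); $\mathrm{Points}(X,\le,\ast)$ is the set of abstract points; $\mathrm{Op}(x)$ is the set of abstract points containing $x$; $\mathrm{St}(X,\le,\ast)$ is the semitopology with points $\mathrm{Points}(X,\le,\ast)$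 and opens $\{\mathrm{Op}(x)\mid x\in X\}$. A semitopology is sober when $\mathrm{nbhd}$ is a bijection from its points onto the abstract points of its semiframe of open sets. *)

From mathcomp Require Import all_boot.
From mathcomp Require Import boolp classical_sets.
Set Implicit Arguments. Unset Strict Implicit. Unset Printing Implicit Defensive.
Local Open Scope classical_set_scope.

Definition semitopology (P : Type) (O : set (set P)) : Prop :=
  O set0 /\ O setT /\ (forall S : set (set P), S `<=` O -> O (\bigcup_(A in S) A)).

Definition scontinuous (P Q : Type) (OP : set (set P)) (OQ : set (set Q))
  (f : P -> Q) : Prop := forall V, OQ V -> OP (f @^-1` V).

Definition is_join (X : Type) (le : X -> X -> Prop) (Y : set X) (x : X) : Prop :=
  (forall y, Y y -> le y x) /\ (forall z, (forall y, Y y -> le y z) -> le x z).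

(* abstract point: nonempty, up-closed, pairwise compatible, completely prime
   (for all Y, including the empty family) *)
Definition abstract_point (X : Type) (le compat : X -> X -> Prop) (F : set X) : Prop :=
  (exists x, F x) /\
  (forall x y, F x -> le x y -> F y) /\
  (forall x y, F x -> F y -> compat x y) /\
  (forall (Y : set X) (x : X), is_join le Y x -> F x -> exists y, Y y /\ F y).

Definition Points (X : Type) (le compat : X -> X -> Prop) : Type :=
  {F : set X | abstract_point le compat F}.

Definition Op (X : Type) (le compat : X -> X -> Prop) (x : X) : set (Points le compat) :=
  fun F => proj1_sig F x.

Definition St_opens (X : Type) (le compat : X -> X -> Prop) : set (set (Points le compat)) :=
  fun U => exists x, U = @Op X le compat x.

Definition opens_of (P : Type) (O : set (set P)) : Type := {U : set P | O U}.

Definition oleq (P : Type) (O : set (set P)) (U V : opens_of O) : Prop :=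
  proj1_sig U `<=` proj1_sig V.

Definition ocompat (P : Type) (O : set (set P)) (U V : opens_of O) : Prop :=
  proj1_sig U `&` proj1_sig V !=set0.

Definition nbhd (P : Type) (O : set (set P)) (p : P) : set (opens_of O) :=
  fun U => proj1_sig U p.
Arguments nbhd {P} O p.

Definition OPoints (P : Type) (O : set (set P)) : Type := Points (@oleq _ O) (@ocompat _ O).

Definition OOp (P : Type) (O : set (set P)) (U : opens_of O) : set (OPoints O) :=
  @Op _ (@oleq _ O) (@ocompat _ O) U.

Definition OSt (P : Type) (O : set (set P)) : set (set (OPoints O)) :=
  @St_opens _ (@oleq _ O) (@ocompat _ O).

Definition sober (P : Type) (O : set (set P)) : Prop :=
  (forall p, abstract_point (@oleq _ O) (@ocompat _ O) (nbhd O p)) /\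
  injective (nbhd O) /\
  (forall F, abstract_point (@oleq _ O) (@ocompat _ O) F -> exists p, nbhd O p = F).
Arguments OSt {P} O _.

From mathcomp Require Import all_boot.
From mathcomp Require Import boolp classical_sets.
Local Open Scope classical_set_scope.

(* For a semitopology (P, O) write St for St(O, ⊆, ≬) and
   Op(U) for its open sets.
   - Joins in (O, ⊆) are unions, so every nbhd(p) is an abstract point and
     p ↦ nbhd(p) is a map into St with nbhd⁻¹(Op(U)) = U; hence it is
     continuous and Op reflects inclusion and preserves intersection.
   - Abstract points are up-closed, compatible and completely prime, so Op
     preserves inclusion, reflects intersection and sends joins to unions.
     Consequently the opens of St contain ∅ = Op(∅), St = Op(P) and are
     closed under unions: St is a semitopology, and U ↦ Op(U) is an
     isomorphism of semiframes from (O, ⊆, ≬) onto the opens of St.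
   - Sobriety of St: neighbourhood filters of points of St are abstract
     points (first item, applied to St); they are injective because a point
     of St is determined by the Op(U) containing it; and an abstract point
     Φ of the opens of St is the neighbourhood filter of the point
     Op⁻¹(Φ), which is an abstract point since abstract points pull back
     along any surjective semiframe morphism (lemma [abstract_point_comap]). *)

Lemma sval_inj (A : Type) (Pr : A -> Prop) (a b : {x | Pr x}) :
  proj1_sig a = proj1_sig b -> a = b.
Proof. by case: a b => a pa [b pb] /= ab; exact: eq_exist. Qed.

Lemma abstract_point_comap (X X' : Type) (le compat : X -> X -> Prop)
    (le' compat' : X' -> X' -> Prop) (g : X -> X') (F : set X') :
  (forall x', exists x, g x = x') ->
  (forall x y, le x y -> le' (g x) (g y)) ->
  (forall x y, compat' (g x) (g y) -> compat x y) ->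
  (forall Y x, is_join le Y x -> is_join le' (g @` Y) (g x)) ->
  abstract_point le' compat' F -> abstract_point le compat (g @^-1` F).
Proof.
move=> g_surj g_mono g_compat g_join [[x' Fx'] [F_up [F_compat F_prime]]].
split; first by have [x gx] := g_surj x'; exists x; rewrite -gx in Fx'.
split; first by move=> x y Fx /g_mono; exact: F_up.
split; first by move=> x y Fx Fy; apply: g_compat; exact: F_compat.
move=> Y x /g_join J Fx; have [_ [[y Yy <-] Fgy]] := F_prime _ _ J Fx.
by exists y.
Qed.

Section JoinsAreUnions.
Variables (Q : Type) (OQ : set (set Q)) (semiQ : semitopology OQ).

Lemma union_is_join (Y : set (opens_of OQ)) : exists u : opens_of OQ,
  is_join (@oleq _ OQ) Y u /\
  (forall q, proj1_sig u q <-> exists2 y, Y y & proj1_sig y q).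
Proof.
have open_union : OQ (\bigcup_(A in [set proj1_sig y | y in Y]) A).
  by apply: semiQ.2.2 => _ [y _ <-]; exact: proj2_sig y.
exists (exist _ _ open_union); split; last first.
  move=> q /=; split; first by case=> _ [y Yy <-] yq; exists y.
  by case=> y Yy yq; exists (proj1_sig y) => //; exists y.
split; first by move=> y Yy q yq; exists (proj1_sig y) => //; exists y.
by move=> z z_ub q [_ [y Yy <-] yq]; exact: z_ub y Yy q yq.
Qed.

Lemma join_sub_union Y x : is_join (@oleq _ OQ) Y x ->
  forall q, proj1_sig x q -> exists2 y, Y y & proj1_sig y q.
Proof.
move=> [_ x_least] q xq; have [u [[u_ub _] u_union]] := union_is_join Y.
by apply/u_union; exact: x_least u u_ub q xq.
Qed.

Lemma nbhd_abstract_point q :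
  abstract_point (@oleq _ OQ) (@ocompat _ OQ) (nbhd OQ q).
Proof.
split; first by exists (exist _ setT semiQ.2.1).
split; first by move=> x y xq xy; exact: xy _ xq.
split; first by move=> x y xq yq; exists q.
by move=> Y x J /(join_sub_union _ _ J) [y Yy yq]; exists y.
Qed.
End JoinsAreUnions.

Section SpectralSpace.
Variables (P : Type) (O : set (set P)) (semiP : semitopology O).

Definition nbhd_point (p : P) : OPoints O :=
  exist _ (nbhd O p) (nbhd_abstract_point _ _ semiP p).

Lemma nbhd_point_preimage (U : opens_of O) : nbhd_point @^-1` OOp U = proj1_sig U.
Proof. by []. Qed.

Lemma Op_sub (U V : opens_of O) : proj1_sig U `<=` proj1_sig V <-> OOp U `<=` OOp V.
Proof.
split; last by move=> UV p Up; exact: (UV (nbhd_point p)).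
by move=> UV [F F_pt] FU; exact: F_pt.2.1 _ _ FU UV.
Qed.

Lemma Op_meet (U V : opens_of O) :
  proj1_sig U `&` proj1_sig V !=set0 <-> OOp U `&` OOp V !=set0.
Proof.
split; first by case=> p UVp; exists (nbhd_point p).
by case=> -[F F_pt] [FU FV]; exact: F_pt.2.2.1 _ _ FU FV.
Qed.

Lemma Op_inj : injective (@OOp _ O).
Proof.
move=> U V UV; apply: sval_inj; apply/seteqP; split; apply/Op_sub; by rewrite UV.
Qed.

Lemma Op_join Y u : is_join (@oleq _ O) Y u ->
  forall F : OPoints O, OOp u F <-> exists2 y, Y y & OOp y F.
Proof.
move=> J [F F_pt]; split.
  by move=> /(F_pt.2.2.2 _ _ J) [y [Yy Fy]]; exists y.
by case=> y Yy Fy; exact: F_pt.2.1 _ _ Fy (J.1 y Yy).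
Qed.

(* No abstract point contains ∅, the join of the empty family. *)
Lemma Op_empty : OOp (exist _ set0 semiP.1) = set0.
Proof.
apply/seteqP; split=> // -[F F_pt] F0.
have empty_join : is_join (@oleq _ O) set0 (exist _ set0 semiP.1).
  by split=> [? [] | z _ p []].
by have [y [[]]] := F_pt.2.2.2 _ _ empty_join F0.
Qed.

(* Every abstract point contains P, being nonempty and up-closed. *)
Lemma Op_full : OOp (exist _ setT semiP.2.1) = setT.
Proof.
apply/seteqP; split=> // -[F F_pt] _; have [x Fx] := F_pt.1.
by apply: F_pt.2.1 Fx _ => p.
Qed.

Lemma Op_union (S : set (set (OPoints O))) :
  S `<=` OSt O -> OSt O (\bigcup_(A in S) A).
Proof.
move=> S_open; have [u [J _]] := union_is_join _ _ semiP (fun x => S (OOp x)).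
exists u; apply/seteqP; split => F.
  case=> W /[dup] SW /S_open [x Wx]; subst W => xF.
  by apply/(Op_join _ _ J); exists x.
by move=> /(Op_join _ _ J) [y Sy yF]; exists (OOp y).
Qed.

Lemma St_semitopology : semitopology (OSt O).
Proof.
split; first by exists (exist _ set0 semiP.1); exact: esym Op_empty.
split; first by exists (exist _ setT semiP.2.1); exact: esym Op_full.
exact: Op_union.
Qed.

Definition Op_open (U : opens_of O) : opens_of (OSt O) :=
  exist _ (OOp U) (ex_intro _ U erefl).

Lemma Op_open_surj (W : opens_of (OSt O)) : exists U, Op_open U = W.
Proof. by case: W => W [U WU]; exists U; apply: sval_inj. Qed.

Lemma Op_open_join Y u : is_join (@oleq _ O) Y u ->
  is_join (@oleq _ (OSt O)) (Op_open @` Y) (Op_open u).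
Proof.
move=> J; split; first by move=> _ [y Yy <-] F Fy; apply/(Op_join _ _ J); exists y.
move=> Z Z_ub F /(Op_join _ _ J) [y Yy Fy].
by apply: (Z_ub (Op_open y)) => //; exists y.
Qed.

(* St(O, ⊆, ≬) is sober; surjectivity pulls an abstract point back along Op. *)
Lemma St_sober : sober (OSt O).
Proof.
split; first exact: nbhd_abstract_point _ _ St_semitopology.
split.
  move=> F G FG; apply: sval_inj; apply/funext => U.
  exact: (congr1 (fun N => N (Op_open U)) FG).
move=> Phi Phi_point.
have Fpoint : abstract_point (@oleq _ O) (@ocompat _ O) (Op_open @^-1` Phi).
  apply: abstract_point_comap Phi_point.
  - exact: Op_open_surj.
  - by move=> U V /Op_sub.
  - by move=> U V /Op_meet.
  - exact: Op_open_join.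
exists (exist _ _ Fpoint); apply/funext => W.
by have [U <-] := Op_open_surj W.
Qed.
End SpectralSpace.

Theorem theorem8p5 (P : Type) (O : set (set P)) :
  semitopology O ->
  exists f : P -> OPoints O,
    (forall p : P, proj1_sig (f p) = nbhd O p) /\
    scontinuous O (OSt O) f /\
    semitopology (OSt O) /\
    sober (OSt O) /\
    (forall U : opens_of O, f @^-1` (OOp U) = proj1_sig U) /\
    (forall U V : opens_of O, OOp U = OOp V -> U = V) /\
    (forall W, OSt O W -> exists U : opens_of O, W = OOp U) /\
    (forall U V : opens_of O, proj1_sig U `<=` proj1_sig V <-> OOp U `<=` OOp V) /\
    (forall U V : opens_of O,
        proj1_sig U `&` proj1_sig V !=set0 <-> OOp U `&` OOp V !=set0).
Proof.
move=> semiP; exists (nbhd_point _ _ semiP).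
split; first by [].
split; first by move=> _ [U ->]; rewrite nbhd_point_preimage; exact: proj2_sig U.
split; first exact: St_semitopology _ _ semiP.
split; first exact: St_sober _ _ semiP.
split; first exact: nbhd_point_preimage _ _ semiP.
split; first exact: Op_inj _ _ semiP.
split; first by move=> W [U ->]; exists U.
split; first exact: Op_sub _ _ semiP.
exact: Op_meet _ _ semiP.
Qed.
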